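(* Suppose $S(Y)$ is such that for every $z\in S(Y)$ there exists a strict ordering $P$ of $Y$ with $z_j\in\overline{W}(Y,P)$ for all $j\in\{1,\dots,m\}$, where $z_j=(z_{j,d(y)})_{y\in Y}$. If an ensemble choice aggregator $C$ satisfies ensemble unanimity, then $C$ respects model choice reversal.
   Context: Let $Y$ be a nonempty set of labels and $m\ge 2$ an integer (the number of models). For each $j\in\{1,\dots,m\}$ let $S_j(Y)\subseteq\mathbb{R}^{|Y|}$ be a set of score vectors whose coordinates are indexed by labels (write $w_{d(y)}$ for the coordinate of $w$ corresponding to label $y$), and let $S(Y)=\prod_{j=1}^m S_j(Y)$. An element $z\in S(Y)$ is written $z=(z_{j,d(y)})_{j,y}$, where $z_{j,d(y)}$ denotes model $j$'s score for label $y$. For a strict (total) ordering $P$ of $Y$, $\overline{W}(Y,P)=\{w\in\mathbb{R}^{|Y|}: \text{for all } y,y'\in Y,\ y\,P\,y' \iff w_{d(y)}>w_{d(y')}\}$. An ensemble choice aggregator is a set-valued function $C:(2^Y\setminus\{\emptyset\})\times S(Y)\to 2^Y\setminus\{\emptyset\}$ such that for every nonempty $Y^*\subseteq Y$ and every $z\in S(Y)$: (i) $C(Y^*,z)\subseteq Y^*$; and (ii) for every $y\in Y^*$, if there does not exist $y'\in Y^*$ with $\{y'\}=C(\{y,y'\},z)$, then $y\in C(Y^*,z)$. Ensemble unanimity: for all $y,y'\in Y$ and all $z\in S(Y)$, if $z_{j,d(y)}>z_{j,d(y')}$ for all $j$ then $\{y\}=C(\{y,y'\},z)$. Model choice reversal: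 for all $y,y'\in Y$ and all $z,z'\in S(Y)$, whenever $y\in C(\{y,y'\},z)$, $y'\notin C(\{y,y'\},z)$ and $y'\in C(\{y,y'\},z')$, there exists $j$ with $z_{j,d(y)}>z_{j,d(y')}$ and $z'_{j,d(y)}<z'_{j,d(y')}$. *)

From mathcomp Require Import all_boot all_order all_algebra.
From mathcomp Require Import reals.
Set Implicit Arguments. Unset Strict Implicit. Unset Printing Implicit Defensive.
Import Order.TTheory GRing.Theory Num.Theory.
Local Open Scope ring_scope.

Section Defs.
Variables (R : realType) (Y : finType) (m : nat).

(* A score vector in R^{|Y|} is represented as a function Y -> R;
   w y is the coordinate w_{d(y)}. *)
Definition scorevec := Y -> R.
(* An element z of S(Y) = prod_j S_j(Y): z j y = z_{j,d(y)}. *)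
Definition profile := 'I_m -> scorevec.

Definition inS (Sj : 'I_m -> scorevec -> Prop) (z : profile) : Prop :=
  forall j, Sj j (z j).

Definition strict_ordering (P : Y -> Y -> Prop) : Prop :=
  (forall y, ~ P y y) /\
  (forall x y w, P x y -> P y w -> P x w) /\
  (forall y y', y <> y' -> P y y' \/ P y' y).

Definition Wbar (P : Y -> Y -> Prop) (w : scorevec) : Prop :=
  forall y y', P y y' <-> w y' < w y.

Definition ensemble_choice_aggregator (Sj : 'I_m -> scorevec -> Prop)
  (C : {set Y} -> profile -> {set Y}) : Prop :=
  forall (Ystar : {set Y}) (z : profile), Ystar != set0 -> inS Sj z ->
    [/\ C Ystar z != set0,
        C Ystar z \subset Ystar &
        forall y, y \in Ystar ->
          ~ (exists y', [/\ y' \in Ystar, y' != y & [set y'] = C [set y; y'] z]) ->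
          y \in C Ystar z].

Definition ensemble_unanimity (Sj : 'I_m -> scorevec -> Prop)
  (C : {set Y} -> profile -> {set Y}) : Prop :=
  forall (y y' : Y) (z : profile), inS Sj z ->
    (forall j, z j y' < z j y) -> [set y] = C [set y; y'] z.

Definition model_choice_reversal (Sj : 'I_m -> scorevec -> Prop)
  (C : {set Y} -> profile -> {set Y}) : Prop :=
  forall (y y' : Y) (z z' : profile), inS Sj z -> inS Sj z' ->
    y \in C [set y; y'] z -> y' \notin C [set y; y'] z ->
    y' \in C [set y; y'] z' ->
    exists j, z j y' < z j y /\ z' j y < z' j y'.

End Defs.

(* When all models rank the labels by one common strict ordering, ensemble
   unanimity decides every binary choice: the aggregator must pick the label
   that every model scores higher.  So if y alone is chosen from {y, y'} at z,
   every model prefers y at z, and if y' is chosen at z', every model prefers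
   y' at z'; any model then witnesses the reversal. *)
From mathcomp Require Import all_boot all_order all_algebra.
From mathcomp Require Import reals.
Import Order.TTheory GRing.Theory Num.Theory.
Local Open Scope ring_scope.

Section CommonOrdering.
Context {R : realType} {Y : finType} {m : nat}.

Lemma Wbar_pair_unanimous {P : Y -> Y -> Prop} {z : profile R Y m} {y y' : Y} :
  strict_ordering P -> (forall j, Wbar P (z j)) -> y != y' ->
  (forall j, z j y' < z j y) \/ (forall j, z j y < z j y').
Proof.
move=> [_ [_ totP]] zP /eqP neq_yy'.
case: (totP y y' neq_yy') => [Pyy'|Py'y]; [left|right] => j.
- exact: (zP j y y').1.
- exact: (zP j y' y).1.
Qed.

Context {Sj : 'I_m -> scorevec R Y -> Prop}
  {C : {set Y} -> profile R Y m -> {set Y}}.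

Hypothesis common_order : forall z : profile R Y m, inS Sj z ->
  exists P : Y -> Y -> Prop, strict_ordering P /\ forall j, Wbar P (z j).
Hypothesis unanimity : ensemble_unanimity Sj C.

Lemma unanimity_dominated_not_chosen {z : profile R Y m} {y y' : Y} :
  inS Sj z -> y != y' -> (forall j, z j y' < z j y) ->
  y' \notin C [set y; y'] z.
Proof.
move=> zS neq_yy' pref_y.
by rewrite -(unanimity _ _ _ zS pref_y) inE eq_sym.
Qed.

Lemma chosen_unanimously_preferred {z : profile R Y m} {y y' : Y} :
  inS Sj z -> y != y' -> y \in C [set y; y'] z ->
  forall j, z j y' < z j y.
Proof.
move=> zS neq_yy' y_chosen.
have [P [ordP zP]] := common_order z zS.
case: (Wbar_pair_unanimous ordP zP neq_yy') => // pref_y'.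
rewrite eq_sym in neq_yy'.
by rewrite setUC (negbTE (unanimity_dominated_not_chosen zS neq_yy' pref_y')) in y_chosen.
Qed.

End CommonOrdering.

Theorem lemma4 (R : realType) (Y : finType) (m : nat)
  (Sj : 'I_m -> scorevec R Y -> Prop)
  (C : {set Y} -> profile R Y m -> {set Y}) :
  (0 < #|Y|)%N -> (2 <= m)%N ->
  (forall z : profile R Y m, inS Sj z ->
     exists P : Y -> Y -> Prop, strict_ordering P /\ forall j, Wbar P (z j)) ->
  ensemble_choice_aggregator Sj C ->
  ensemble_unanimity Sj C ->
  model_choice_reversal Sj C.
Proof.
move=> _ m_ge2 common_order _ unanimity y y' z z' zS z'S y_in y'_out y'_in.
have neq_yy' : y != y' by apply/eqP => eq_yy'; subst y'; rewrite y_in in y'_out.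
have m_gt0 : (0 < m)%N by apply: leq_trans m_ge2.
have pref_y := chosen_unanimously_preferred common_order unanimity zS neq_yy' y_in.
have pref_y' : forall j, z' j y < z' j y'.
  apply: (chosen_unanimously_preferred common_order unanimity z'S).
    by rewrite eq_sym.
  by rewrite setUC.
by exists (Ordinal m_gt0); split.
Qed.
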